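(* For every nonnegative integer $p$, let $\mathfrak s\subset\mathfrak{sp}(V^{\mathfrak{sp}}_{p;2p})$ be an $\mathfrak{sl}_2$-subalgebra containing $\delta^{\mathfrak{sp}}_{p;2p}$, spanned by elements of degrees $-1,0,1$, for which $E=\operatorname{span}\{e_i\}$ and $F=\operatorname{span}\{f_i\}$ are irreducible submodules. Then the maximal $\operatorname{ad}\mathfrak s$-submodule $\mathfrak l^{\mathfrak{sp}}(V^{\mathfrak{sp}}_{p;2p})$ of $\mathfrak{sp}(V^{\mathfrak{sp}}_{p;2p})$ contained in the nonnegative-degree part is a Lie subalgebra isomorphic to $\mathfrak{sl}_2$. Moreover, for every $m\in\frac12\mathbb Z_{\rm odd}$, $m>0$, and the analogous $\mathfrak{sl}_2$-subalgebra of $\mathfrak{sp}(\mathcal L^{\mathfrak{sp}}_m)$ containing $\tau^{\mathfrak{sp}}_m$ (acting irreducibly), the corresponding maximal submodule $\mathfrak l^{\mathfrak{sp}}(\mathcal L^{\mathfrak{sp}}_m)$ is $0$.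
   Context: $V^{\mathfrak{sp}}_{p;2p}$ is the symplectic space with basis $e_{-p},\dots,e_p,f_{-p},\dots,f_p$ (index $=$ degree), $\sigma(e_i,e_j)=\sigma(f_i,f_j)=0$, $\sigma(e_i,f_j)=(-1)^{p-i}$ if $j=-i$ and $0$ otherwise; $\delta^{\mathfrak{sp}}_{p;2p}(e_i)=e_{i-1}$, $\delta^{\mathfrak{sp}}_{p;2p}(f_i)=f_{i-1}$ for $i>-p$, $\delta^{\mathfrak{sp}}_{p;2p}(e_{-p})=\delta^{\mathfrak{sp}}_{p;2p}(f_{-p})=0$. $\frac12\mathbb Z_{\rm odd}=\{i+\frac12:i\in\mathbb Z\}$; $\mathcal L^{\mathfrak{sp}}_m=\bigoplus_{i\in\frac12\mathbb Z_{\rm odd},|i|\le m}E_i$ with $\dim E_i=1$ in degree $i$, a symplectic space with $\sigma(E_i,E_j)=0$ unless $i+j=0$, and $\tau^{\mathfrak{sp}}_m\in\mathfrak{sp}(\mathcal L^{\mathfrak{sp}}_m)$ maps $E_i$ onto $E_{i-1}$ ($i>-m$) and $E_{-m}$ to $0$. Gradings on endomorphism spaces: degree-$k$ maps send degree-$i$ vectors to degree $i+k$. *)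

From HB Require Import structures.
From mathcomp Require Import all_boot all_order all_algebra.
Set Implicit Arguments. Unset Strict Implicit. Unset Printing Implicit Defensive.
Import Order.TTheory GRing.Theory Num.Theory.
Local Open Scope ring_scope.

(* ---------- generic notions (row-vector convention: v acts as v *m A) ------ *)
(* Basis vectors b_i, i : 'I_n; b_i *m A = \sum_j A i j b_j.
   A symplectic form is given by a matrix Om, sigma(u,w) = u *m Om *m w^T. *)

Definition lieb (F : fieldType) (n : nat) (A B : 'M[F]_n) : 'M[F]_n :=
  A *m B - B *m A.

(* A in sp(V, Om): sigma(uA,w) + sigma(u,wA) = 0 for all u, w. *)
Definition in_sp (F : fieldType) (n : nat) (Om A : 'M[F]_n) : Prop :=
  A *m Om + Om *m A^T = 0.

Definition homog (F : fieldType) (n : nat) (deg : 'I_n -> rat) (k : int)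
  (A : 'M[F]_n) : Prop :=
  forall i j, A i j != 0 -> deg j = deg i + k%:~R.

Definition nonneg_deg (F : fieldType) (n : nat) (deg : 'I_n -> rat)
  (A : 'M[F]_n) : Prop :=
  forall i j, A i j != 0 -> deg i <= deg j.

Definition span3 (F : fieldType) (n : nat) (X Y Z A : 'M[F]_n) : Prop :=
  exists a b c : F, A = a *: X + b *: Y + c *: Z.

Definition indep3 (F : fieldType) (n : nat) (X Y Z : 'M[F]_n) : Prop :=
  forall a b c : F, a *: X + b *: Y + c *: Z = 0 -> [/\ a = 0, b = 0 & c = 0].

Definition sl2_triple (F : fieldType) (n : nat) (X H Y : 'M[F]_n) : Prop :=
  [/\ lieb H X = 2%:R *: X, lieb H Y = - (2%:R *: Y) & lieb X Y = H].

Definition graded_sl2 (F : fieldType) (n : nat) (deg : 'I_n -> rat)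
  (Om x h d : 'M[F]_n) : Prop :=
  [/\ [/\ in_sp Om x, in_sp Om h & in_sp Om d],
      [/\ homog deg 1 x, homog deg 0 h & homog deg (-1) d],
      sl2_triple x h d & indep3 x h d].

Definition s_stable (F : fieldType) (n : nat) (x h d W : 'M[F]_n) : bool :=
  [&& (W *m x <= W)%MS, (W *m h <= W)%MS & (W *m d <= W)%MS].

Definition irreducible_sub (F : fieldType) (n : nat) (x h d W : 'M[F]_n) : Prop :=
  [/\ s_stable x h d W, (0 < \rank W)%N &
      forall U : 'M[F]_n, s_stable x h d U -> (U <= W)%MS ->
        \rank U = 0%N \/ (U == W)%MS].

Definition ad_submodule (F : fieldType) (n : nat) (x h d : 'M[F]_n)
  (U : 'M[F]_n -> Prop) : Prop :=
  [/\ U 0, (forall A B, U A -> U B -> U (A + B)),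
      (forall (c : F) A, U A -> U (c *: A)) &
      (forall S A, span3 x h d S -> U A -> U (lieb S A))].

(* membership in the maximal ad s-submodule of sp(V,Om) contained in the
   nonnegative-degree part (= union/sum of all such submodules) *)
Definition in_lmax (F : fieldType) (n : nat) (deg : 'I_n -> rat)
  (Om x h d : 'M[F]_n) (A : 'M[F]_n) : Prop :=
  exists U : 'M[F]_n -> Prop,
    [/\ ad_submodule x h d U,
        (forall B, U B -> in_sp Om B /\ nonneg_deg deg B) & U A].

(* indices: lshift k <-> e_{k-p}, rshift k <-> f_{k-p}, k < 2p+1 *)
Notation nV p := (p.*2.+1 + p.*2.+1)%N.

Definition degV (p : nat) (i : 'I_(nV p)) : rat :=
  match split i with inl k => (k : nat)%:R - p%:R | inr k => (k : nat)%:R - p%:R end.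

(* sigma(e_i, f_{-i}) = (-1)^(p-i); with i = a - p this is (-1)^a *)
Definition OmegaV (F : fieldType) (p : nat) : 'M[F]_(nV p) :=
  \matrix_(i, j)
    match split i, split j with
    | inl a, inr b => if (a + b == p.*2)%N then (-1) ^+ a else 0
    | inr b, inl a => if (a + b == p.*2)%N then - (-1) ^+ a else 0
    | _, _ => 0
    end.

(* delta(e_i) = e_{i-1}, delta(f_i) = f_{i-1}, delta(e_{-p}) = delta(f_{-p}) = 0 *)
Definition deltaV (F : fieldType) (p : nat) : 'M[F]_(nV p) :=
  \matrix_(i, j)
    match split i, split j with
    | inl a, inl b => ((a : nat) == b.+1)%:R
    | inr a, inr b => ((a : nat) == b.+1)%:R
    | _, _ => 0
    end.

Definition is_e (p : nat) (i : 'I_(nV p)) : bool :=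
  if split i is inl _ then true else false.

(* row spaces of E = span{e_i} and F = span{f_i} *)
Definition Espace (F : fieldType) (p : nat) : 'M[F]_(nV p) :=
  \matrix_(i, j) ((i == j) && is_e i)%:R.
Definition Fspace (F : fieldType) (p : nat) : 'M[F]_(nV p) :=
  \matrix_(i, j) ((i == j) && ~~ is_e i)%:R.

(* index j : 'I_(2k+2) <-> E_{j - m}, dimension 2m+1 = 2k+2 *)
Definition degL (k : nat) (j : 'I_(k.*2.+2)) : rat :=
  (j : nat)%:R - (k%:R + 2%:R^-1).

From HB Require Import structures.
From mathcomp Require Import all_boot all_order all_algebra.
From mathcomp Require Import zify ring.
Set Implicit Arguments. Unset Strict Implicit. Unset Printing Implicit Defensive.
Import Order.TTheory GRing.Theory Num.Theory.
Local Open Scope ring_scope.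

(* Both statements rest on one fact about a single Jordan block.  Let tau be
   the lowering shift on n+1 basis vectors (tau e_{j+1} = e_j up to nonzero
   scalars) and call M "orbit-upper" if every iterate (ad tau)^r M is upper
   triangular, i.e. lies in nonnegative degree.  Then, when n+1 is invertible,
   M is a scalar matrix (orbit_upper_scalar).  The proof tracks the lowest
   nonzero superdiagonal: ad tau lowers it by one, is injective on positive
   superdiagonals (band_lieb_inj), its kernel on diagonal matrices is the
   scalars, and a commutator has trace zero, which kills the diagonal part
   reached after enough iterations (orbit_upper_band_step).
   - On L_m the lowering operator is one Jordan block, so l(L_m) consists of
     scalars lying in sp, i.e. l(L_m) = 0 (lmax_single_shift_eq0).
   - On V_{p;2p} = E + F the operators of s are block diagonal; homogeneity
     and uniqueness of the raising partner of a shift (raising_partner_unique)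
     force x = diag(x1,x1), h = diag(h1,h1).  Each 2x2 block of an element of
     l(V) is orbit-upper, hence scalar, so l(V) is the copy of sl2 formed by
     the block-scalar matrices in sp, which ad s indeed annihilates. *)

Section LieBracket.
Variables (F : fieldType) (n : nat).
Implicit Types A B C : 'M[F]_n.

Lemma trace_lieb A B : \tr (lieb A B) = 0.
Proof. by rewrite /lieb raddfB /= mxtrace_mulC subrr. Qed.

Lemma liebBr A B C :
  lieb A (B - C) = lieb A B - lieb A C.
Proof.
by rewrite /lieb mulmxBr mulmxBl !opprB addrACA [RHS]addrACA [- (A *m C) + _]addrC.
Qed.

Lemma lieb_antisym A B : lieb A B = - lieb B A.
Proof. by rewrite /lieb opprB. Qed.

Lemma lieb_scalar A (c : F) : lieb A c%:M = 0.
Proof. by rewrite /lieb scalar_mxC subrr. Qed.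

Lemma liebE A B i j : lieb A B i j = (A *m B) i j - (B *m A) i j.
Proof. by rewrite /lieb !mxE. Qed.
End LieBracket.

Section Band.
Variables (F : fieldType) (n : nat).

(* M lives in degrees >= t: its nonzero entries sit on or above the t-th
   superdiagonal (entry (i, j) has degree j - i). *)
Definition band (t : nat) (M : 'M[F]_n) : Prop :=
  forall i j : 'I_n, M i j != 0 -> (i + t <= j)%N.

Lemma band_weaken s t (M : 'M[F]_n) : (s <= t)%N -> band t M -> band s M.
Proof. by move=> Hst HM i j /HM; lia. Qed.

Lemma band_sub t (A B : 'M[F]_n) : band t A -> band t B -> band t (A - B).
Proof.
move=> HA HB i j; apply: contraR => Hij; rewrite !mxE.
have /eqP -> : A i j == 0 by apply: contraR Hij => /HA.
have /eqP -> : B i j == 0 by apply: contraR Hij => /HB.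
by rewrite subrr.
Qed.

Lemma band0_scalar (c : F) : band 0 c%:M.
Proof.
move=> i j; rewrite mxE addn0; have [->|_] := eqVneq i j => //.
by rewrite mulr0n eqxx.
Qed.

Lemma band1_of_diag0 (M : 'M[F]_n) :
  band 0 M -> (forall i, M i i = 0) -> band 1 M.
Proof.
move=> HM Hd i j Hij; have := HM i j Hij; rewrite addn0 addn1 leq_eqVlt.
case: eqP => // /val_inj Eij.
by rewrite Eij Hd eqxx in Hij.
Qed.

Variable tau : 'M[F]_n.
Hypothesis tau_supp : forall i j : 'I_n, tau i j != 0 -> (j : nat).+1 = i.
Hypothesis tau_full : forall i j : 'I_n, (j : nat).+1 = i -> tau i j != 0.

Lemma mul_tau_l (M : 'M[F]_n) (i j l : 'I_n) :
  (l : nat).+1 = i -> (tau *m M) i j = tau i l * M l j.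
Proof.
move=> Hl; rewrite mxE (bigD1 l) //= big1 ?addr0 // => l' /negP Hl'.
have [->|/tau_supp Hi] := eqVneq (tau i l') 0; first by rewrite mul0r.
by exfalso; apply: Hl'; apply/eqP/val_inj => /=; lia.
Qed.

Lemma mul_tau_r (M : 'M[F]_n) (i j l : 'I_n) :
  (j : nat).+1 = l -> (M *m tau) i j = M i l * tau l j.
Proof.
move=> Hl; rewrite mxE (bigD1 l) //= big1 ?addr0 // => l' /negP Hl'.
have [->|/tau_supp Hj] := eqVneq (tau l' j) 0; first by rewrite mulr0.
by exfalso; apply: Hl'; apply/eqP/val_inj => /=; lia.
Qed.

Lemma mul_tau_l_eq0 (M : 'M[F]_n) (i j : 'I_n) :
  (forall l : 'I_n, (l : nat).+1 = i -> M l j = 0) -> (tau *m M) i j = 0.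
Proof.
move=> HM; rewrite mxE big1 // => l _.
have [->|/tau_supp /HM ->] := eqVneq (tau i l) 0; by rewrite ?mul0r ?mulr0.
Qed.

Lemma mul_tau_r_eq0 (M : 'M[F]_n) (i j : 'I_n) :
  (forall l : 'I_n, (j : nat).+1 = l -> M i l = 0) -> (M *m tau) i j = 0.
Proof.
move=> HM; rewrite mxE big1 // => l _.
have [->|/tau_supp /HM ->] := eqVneq (tau l j) 0; by rewrite ?mul0r ?mulr0.
Qed.

Lemma band_lieb t (M : 'M[F]_n) : band t.+1 M -> band t (lieb tau M).
Proof.
move=> HM i j; apply: contraR => Hij; rewrite liebE.
rewrite mul_tau_l_eq0 ?mul_tau_r_eq0 ?subrr // => l Hl;
  apply/eqP; apply: contraR Hij => /HM; lia.
Qed.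

(* Its entries are killed row by row, from the top. *)
Lemma band_lieb_inj t (M : 'M[F]_n) :
  band t.+1 M -> band t.+1 (lieb tau M) -> band t.+2 M.
Proof.
move=> HM HL.
suff edge0 : forall k (i j : 'I_n), (i : nat) = k -> (j : nat) = (i + t.+1)%N ->
    M i j = 0.
  move=> i j Hij; have := HM i j Hij.
  have [/(edge0 _ _ _ erefl)|] := eqVneq (j : nat) (i + t.+1)%N; last lia.
  by move/eqP: Hij.
elim/ltn_ind=> k IH i j Hi Hj.
have Hj' : ((i + t)%N < n)%N by move: (ltn_ord j); lia.
set j' := Ordinal Hj'.
have : lieb tau M i j' = 0 by apply/eqP; apply: contraT => /HL /=; lia.
rewrite liebE (mul_tau_r _ _ (l := j)) /=; last lia.
rewrite mul_tau_l_eq0 ?sub0r => [/eqP|l Hl]; last first.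
  by apply: (IH l) => /=; lia.
rewrite oppr_eq0 mulf_eq0 (negbTE (tau_full _)) ?orbF /=; [by move/eqP|lia].
Qed.

(* if M and [tau, M] are both upper triangular, consecutive diagonal entries
   of M agree (the degree -1 part of [tau, M] is their difference times tau) *)
Lemma band0_lieb_diag (M : 'M[F]_n) : band 0 M -> band 0 (lieb tau M) ->
  forall i j : 'I_n, (j : nat) = (i : nat).+1 -> M i i = M j j.
Proof.
move=> HM HL i j Hij.
have : lieb tau M j i = 0 by apply/eqP; apply: contraT => /HL /=; lia.
rewrite liebE (mul_tau_l _ _ (l := i)) // (mul_tau_r _ _ (l := j)) //.
rewrite [M j j * _]mulrC -mulrBr => /eqP.
by rewrite mulf_eq0 (negbTE (tau_full _)) //= subr_eq0 => /eqP.
Qed.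

Lemma iter_band t r (M : 'M[F]_n) :
  band (t + r) M -> band t (iter r (lieb tau) M).
Proof.
elim: r t M => [|r IH] t M; first by rewrite addn0.
by rewrite addnS -addSn iterSr => /band_lieb /IH.
Qed.

Lemma iter_band_back t r (M : 'M[F]_n) :
  band (t + r) M -> band t.+1 (iter r (lieb tau) M) -> band (t + r).+1 M.
Proof.
elim: r t => [|r IH] t; first by rewrite addn0.
rewrite iterS addnS -addSn => HM HL; apply: IH => //.
by apply: band_lieb_inj => //; apply: iter_band.
Qed.
End Band.

Section Orbit.
Variables (F : fieldType) (n : nat) (tau : 'M[F]_n.+1).
Hypothesis tau_supp : forall i j : 'I_n.+1, tau i j != 0 -> (j : nat).+1 = i.
Hypothesis tau_full : forall i j : 'I_n.+1, (j : nat).+1 = i -> tau i j != 0.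
Hypothesis dim_neq0 : n.+1%:R != 0 :> F.

Definition orbit_upper (M : 'M[F]_n.+1) : Prop :=
  forall r, band 0 (iter r (lieb tau) M).

Lemma band0_diag_const (M : 'M[F]_n.+1) : band 0 M -> band 0 (lieb tau M) ->
  forall i : 'I_n.+1, M i i = M ord0 ord0.
Proof.
move=> HM HL.
suff diag_k : forall k (i : 'I_n.+1), (i : nat) = k -> M i i = M ord0 ord0.
  by move=> i; apply: diag_k erefl.
elim=> [|k IH] i Hi; first by congr (M _ _); apply: val_inj.
have Hk : (k < n.+1)%N by move: (ltn_ord i); lia.
rewrite -(band0_lieb_diag tau_supp tau_full HM HL (i := Ordinal Hk)) /=; last lia.
exact: IH.
Qed.

Lemma band0_trace0 (N : 'M[F]_n.+1) :
  band 0 N -> band 0 (lieb tau N) -> \tr N = 0 -> band 1 N.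
Proof.
move=> HN HL Htr; have Hc := band0_diag_const HN HL.
have N00 : N ord0 ord0 = 0.
  move: Htr; rewrite /mxtrace (eq_bigr _ (fun i _ => Hc i)) sumr_const card_ord.
  by rewrite -mulr_natr => /eqP; rewrite mulf_eq0 (negbTE dim_neq0) orbF => /eqP.
by apply: band1_of_diag0 => // i; rewrite Hc.
Qed.

(* key step: the lowest degree s+1 > 0 of an orbit-upper matrix is pushed by
   (ad tau)^(s+1) to degree 0, where it becomes a commutator, hence traceless,
   hence zero; pulling back with iter_band_back, M starts in degree s+2 *)
Lemma orbit_upper_band_step s (M : 'M[F]_n.+1) :
  orbit_upper M -> band s.+1 M -> band s.+2 M.
Proof.
move=> HM Hs.
have Hlast : band 1 (iter s.+1 (lieb tau) M).
  apply: band0_trace0; first exact: HM.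
    by rewrite -iterS; apply: HM.
  by rewrite iterS trace_lieb.
by apply: (iter_band_back tau_supp tau_full (t := 0)).
Qed.

Lemma orbit_upper_band1_eq0 (M : 'M[F]_n.+1) :
  orbit_upper M -> band 1 M -> M = 0.
Proof.
move=> HM H1; have Hs : forall s, band s.+1 M.
  by elim=> // s IH; apply: orbit_upper_band_step.
apply/matrixP => i j; rewrite mxE; apply/eqP; apply: contraT => /(Hs n) /=.
by move: (ltn_ord j); lia.
Qed.

(* main lemma: orbit-upper matrices are scalar (apply the previous lemma to M
   minus its constant diagonal, which has the same ad tau-orbit after step 0) *)
Lemma orbit_upper_scalar (M : 'M[F]_n.+1) : orbit_upper M -> M = (M ord0 ord0)%:M.
Proof.
move=> HM; set c := M ord0 ord0.
have Hc := band0_diag_const (HM 0%N) (HM 1%N).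
have B0 : band 0 (M - c%:M) := band_sub (HM 0%N) (band0_scalar (c := c)).
apply/eqP; rewrite -subr_eq0; apply/eqP/orbit_upper_band1_eq0.
  case=> [|r] //; rewrite iterSr liebBr lieb_scalar subr0 -iterSr; exact: HM.
by apply: band1_of_diag0 B0 _ => i; rewrite !mxE eqxx mulr1n Hc subrr.
Qed.

Lemma iter_lieb0 r : iter r (lieb tau) 0 = 0.
Proof. by elim: r => // r IH; rewrite iterS IH /lieb mulmx0 mul0mx subrr. Qed.

(* uniqueness of the raising partner: two strictly upper triangular x1, x4
   with [x_k, tau] = h_k upper triangular and [h1, tau] = [h4, tau] coincide,
   because x1 - x4 is orbit-upper (its orbit is x1 - x4, h4 - h1, 0, ...) *)
Lemma raising_partner_unique (x1 x4 h1 h4 : 'M[F]_n.+1) :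
  band 1 x1 -> band 1 x4 -> band 0 h1 -> band 0 h4 ->
  lieb h1 tau = lieb h4 tau -> lieb x1 tau = h1 -> lieb x4 tau = h4 -> x1 = x4.
Proof.
move=> Bx1 Bx4 Bh1 Bh4 Eh Ex1 Ex4.
have lieb_tauD : lieb tau (x1 - x4) = h4 - h1.
  by rewrite liebBr !(lieb_antisym tau) Ex1 Ex4 opprK addrC.
apply/eqP; rewrite -subr_eq0; apply/eqP/orbit_upper_band1_eq0; last exact: band_sub.
case=> [|[|r]]; first exact: band_weaken (band_sub Bx1 Bx4).
  by rewrite /= lieb_tauD; apply: band_sub.
rewrite iterSr iterSr lieb_tauD.
have -> : lieb tau (h4 - h1) = 0 by rewrite liebBr !(lieb_antisym tau) Eh subrr.
by rewrite iter_lieb0 => i j; rewrite mxE eqxx.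
Qed.
End Orbit.

Lemma in_lmax_iter (F : fieldType) (n : nat) (deg : 'I_n -> rat)
    (Om x h d A : 'M[F]_n) r :
  in_lmax deg Om x h d A ->
  in_sp Om (iter r (lieb d) A) /\ nonneg_deg deg (iter r (lieb d) A).
Proof.
move=> [U [[_ _ _ U_ad] U_sub UA]]; apply: U_sub.
elim: r => // r IH; rewrite iterS; apply: U_ad IH.
by exists 0, 0, 1; rewrite !scale0r !add0r scale1r.
Qed.

Lemma nonneg_deg_band (F : fieldType) (n : nat) (deg : 'I_n -> rat) (M : 'M[F]_n) :
  (forall i j, deg i <= deg j -> (i <= j)%N) -> nonneg_deg deg M -> band 0 M.
Proof. by move=> deg_mono HM i j /HM /deg_mono; rewrite addn0. Qed.

(* if the lowering operator is a single Jordan block, l = 0: its elements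
   are orbit-upper, hence scalar, and a scalar c lies in sp(Om) only if
   2c Om = 0, i.e. c = 0 *)
Lemma lmax_single_shift_eq0 (F : fieldType) (n : nat) (deg : 'I_n.+1 -> rat)
    (Om x h tau A : 'M[F]_n.+1) :
  (forall i j : 'I_n.+1, tau i j != 0 -> (j : nat).+1 = i) ->
  (forall i j : 'I_n.+1, (j : nat).+1 = i -> tau i j != 0) ->
  n.+1%:R != 0 :> F -> 2%:R != 0 :> F -> Om \in unitmx ->
  (forall i j, deg i <= deg j -> (i <= j)%N) ->
  in_lmax deg Om x h tau A -> A = 0.
Proof.
move=> tau_supp tau_full dim_neq0 two_neq0 Om_unit deg_mono HA.
have Aorb : orbit_upper tau A.
  by move=> r; apply: nonneg_deg_band deg_mono (in_lmax_iter r HA).2.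
have EA := orbit_upper_scalar tau_supp tau_full dim_neq0 Aorb.
set c := A ord0 ord0 in EA; have [Asp _] := in_lmax_iter 0 HA.
move: Asp; rewrite /in_sp /= EA tr_scalar_mx mul_scalar_mx mul_mx_scalar.
rewrite -scalerDl => /eqP; rewrite scaler_eq0 => /orP [|/eqP Om0].
  rewrite -mulr2n -mulr_natr mulf_eq0 (negbTE two_neq0) orbF => /eqP ->.
  by rewrite raddf0.
by move: Om_unit; rewrite Om0 unitmxE det0 unitr0.
Qed.

(* V = E + F is handled through 2x2 block matrices, E and F each carrying
   the basis indexed by 'I_(2p+1) *)
Lemma split_lshift m n (a : 'I_m) : split (lshift n a) = inl a.
Proof. exact: (unsplitK (inl a)). Qed.

Lemma split_rshift m n (b : 'I_n) : split (rshift m b) = inr b.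
Proof. exact: (unsplitK (inr b)). Qed.

Section SymplecticBlocks.
Variables (F : fieldType) (p : nat).
Local Notation m := p.*2.+1.

(* the lowering shift on one block, and the antidiagonal matrix of sigma on E x F *)
Definition shiftJ : 'M[F]_m := \matrix_(a, b) ((a : nat) == b.+1)%:R.

Definition pairingW : 'M[F]_m :=
  \matrix_(a, b) (if (a + b == p.*2)%N then (-1) ^+ a else 0).

Ltac bsplit i := rewrite -[i]splitK; case: (split i) => ? /=.

Lemma deltaV_block : deltaV F p = block_mx shiftJ 0 0 shiftJ.
Proof.
apply/matrixP => i j; bsplit i; bsplit j;
by rewrite ?block_mxEul ?block_mxEur ?block_mxEdl ?block_mxEdr !mxE
  ?split_lshift ?split_rshift.
Qed.

Lemma Espace_block : Espace F p = block_mx 1%:M 0 0 0.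
Proof.
apply/matrixP => i j; bsplit i; bsplit j;
by rewrite ?block_mxEul ?block_mxEur ?block_mxEdl ?block_mxEdr !mxE ?eq_shift
  /is_e ?split_lshift ?split_rshift ?andbT ?andbF.
Qed.

Lemma Fspace_block : Fspace F p = block_mx 0 0 0 1%:M.
Proof.
apply/matrixP => i j; bsplit i; bsplit j;
by rewrite ?block_mxEul ?block_mxEur ?block_mxEdl ?block_mxEdr !mxE ?eq_shift
  /is_e ?split_lshift ?split_rshift ?andbT ?andbF.
Qed.

Lemma OmegaV_block : OmegaV F p = block_mx 0 pairingW (- pairingW) 0.
Proof.
apply/matrixP => i j; bsplit i; bsplit j;
rewrite ?block_mxEul ?block_mxEur ?block_mxEdl ?block_mxEdr !mxE
  ?split_lshift ?split_rshift //.
rewrite addnC; case: eqP => [Hab|_]; last by rewrite oppr0.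
rewrite -signr_odd -[(-1) ^+ _ in RHS]signr_odd; congr (- (-1) ^+ _).
by have := congr1 odd Hab; rewrite oddD odd_double; case: (odd _); case: (odd _).
Qed.

Lemma degV_lshift (a : 'I_m) : degV (lshift m a) = (a : nat)%:R - p%:R.
Proof. by rewrite /degV split_lshift. Qed.

Lemma degV_rshift (a : 'I_m) : degV (rshift m a) = (a : nat)%:R - p%:R.
Proof. by rewrite /degV split_rshift. Qed.

Lemma stable_EF_block_diag (X : 'M[F]_(m + m)) :
  (Espace F p *m X <= Espace F p)%MS -> (Fspace F p *m X <= Fspace F p)%MS ->
  X = block_mx (ulsubmx X) 0 0 (drsubmx X).
Proof.
rewrite Espace_block Fspace_block => /submxP [D1 E1] /submxP [D2 E2].
move: E1 E2; rewrite -{1 2 3}[X]submxK -[D1]submxK -[D2]submxK !mulmx_block.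
rewrite !mul1mx !mul0mx !mulmx1 !mulmx0 !addr0 !add0r.
by move=> /eq_block_mx [_ -> _ _] /eq_block_mx [_ _ -> _].
Qed.

Lemma degV_le (a b : 'I_m) :
  ((a : nat)%:R - p%:R <= (b : nat)%:R - p%:R :> rat) = (a <= b)%N.
Proof. by rewrite lerD2r ler_nat. Qed.

Lemma degV_eq (k : nat) (a b : 'I_m) :
  (b : nat)%:R - p%:R = (a : nat)%:R - p%:R + (k%:Z)%:~R :> rat -> (a + k <= b)%N.
Proof.
by rewrite pmulrn addrAC -natrD => /(subIr _) /eqP; rewrite eqr_nat => /eqP ->.
Qed.

Lemma homog_block_band (k : nat) (X : 'M[F]_(m + m)) :
  homog (@degV p) k%:Z X -> band k (ulsubmx X) /\ band k (drsubmx X).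
Proof.
move=> HX; split=> a b; rewrite !mxE => /HX;
  by rewrite ?degV_lshift ?degV_rshift => /degV_eq.
Qed.

Lemma nonneg_block (A1 A2 A3 A4 : 'M[F]_m) :
  nonneg_deg (@degV p) (block_mx A1 A2 A3 A4) <->
  [/\ band 0 A1, band 0 A2, band 0 A3 & band 0 A4].
Proof.
split=> [H|[H1 H2 H3 H4] i j].
  split=> a b Hab; rewrite addn0 -degV_le.
  - by rewrite -(degV_lshift a) -degV_lshift; apply: H; rewrite block_mxEul.
  - by rewrite -(degV_lshift a) -degV_rshift; apply: H; rewrite block_mxEur.
  - by rewrite -(degV_rshift a) -degV_lshift; apply: H; rewrite block_mxEdl.
  - by rewrite -(degV_rshift a) -degV_rshift; apply: H; rewrite block_mxEdr.
bsplit i; bsplit j;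
rewrite ?block_mxEul ?block_mxEur ?block_mxEdl ?block_mxEdr
  ?degV_lshift ?degV_rshift degV_le => H.
- by have := H1 _ _ H; rewrite addn0.
- by have := H2 _ _ H; rewrite addn0.
- by have := H3 _ _ H; rewrite addn0.
- by have := H4 _ _ H; rewrite addn0.
Qed.

Definition sblock (c1 c2 c3 c4 : F) : 'M[F]_(m + m) :=
  block_mx c1%:M c2%:M c3%:M c4%:M.

Lemma sblock0 : sblock 0 0 0 0 = 0.
Proof. by rewrite /sblock !raddf0 block_mx0. Qed.

Lemma sblockD c1 c2 c3 c4 d1 d2 d3 d4 :
  sblock c1 c2 c3 c4 + sblock d1 d2 d3 d4 =
  sblock (c1 + d1) (c2 + d2) (c3 + d3) (c4 + d4).
Proof. by rewrite /sblock add_block_mx !raddfD. Qed.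

Lemma sblockZ a c1 c2 c3 c4 :
  a *: sblock c1 c2 c3 c4 = sblock (a * c1) (a * c2) (a * c3) (a * c4).
Proof. by rewrite /sblock scale_block_mx !scale_scalar_mx. Qed.

Lemma sblockN c1 c2 c3 c4 :
  - sblock c1 c2 c3 c4 = sblock (- c1) (- c2) (- c3) (- c4).
Proof. by rewrite /sblock opp_block_mx !raddfN. Qed.

Lemma lieb_sblock c1 c2 c3 c4 d1 d2 d3 d4 :
  lieb (sblock c1 c2 c3 c4) (sblock d1 d2 d3 d4) =
  sblock (c2 * d3 - d2 * c3) (c1 * d2 + c2 * d4 - (d1 * c2 + d2 * c4))
         (c3 * d1 + c4 * d3 - (d3 * c1 + d4 * c3)) (c3 * d2 - d3 * c2).
Proof.
rewrite /lieb /sblock !mulmx_block -!scalar_mxM -!raddfD opp_block_mx -!raddfN.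
by rewrite add_block_mx -!raddfD; congr block_mx; congr scalar_mx; ring.
Qed.

Lemma sblock_inj c1 c2 c3 c4 d1 d2 d3 d4 :
  sblock c1 c2 c3 c4 = sblock d1 d2 d3 d4 -> [/\ c1 = d1, c2 = d2, c3 = d3 & c4 = d4].
Proof.
have scalar_inj (a b : F) : a%:M = b%:M :> 'M_m -> a = b.
  by move/matrixP/(_ ord0 ord0); rewrite !mxE !mulr1n.
by move/eq_block_mx => [/scalar_inj ? /scalar_inj ? /scalar_inj ? /scalar_inj ?].
Qed.

Lemma sp_sblock c1 c2 c3 c4 :
  in_sp (OmegaV F p) (sblock c1 c2 c3 c4) <-> c1 + c4 = 0.
Proof.
rewrite /in_sp.
have -> : sblock c1 c2 c3 c4 *m OmegaV F p + OmegaV F p *m (sblock c1 c2 c3 c4)^T =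
    block_mx 0 ((c1 + c4) *: pairingW) (- ((c1 + c4) *: pairingW)) 0.
  rewrite OmegaV_block /sblock tr_block_mx !tr_scalar_mx !mulmx_block.
  rewrite !mul0mx !mulmx0 !addr0 !add0r !mul_scalar_mx !mul_mx_scalar add_block_mx.
  by congr block_mx; rewrite ?scalerN ?scalerDl ?addNr ?subrr // -opprD addrC.
have W_neq0 : pairingW != 0.
  apply/eqP => /matrixP /(_ ord0 ord_max); rewrite !mxE /= add0n eqxx expr0.
  by apply/eqP; rewrite oner_eq0.
rewrite -(block_mx0 _ m m m m); split; last by move=> ->; rewrite scale0r oppr0.
by case/eq_block_mx=> _ /eqP; rewrite scaler_eq0 (negbTE W_neq0) orbF => /eqP.
Qed.

Lemma lieb_block_diag (P Q B1 B2 B3 B4 : 'M[F]_m) :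
  lieb (block_mx P 0 0 Q) (block_mx B1 B2 B3 B4) =
  block_mx (lieb P B1) (P *m B2 - B2 *m Q) (Q *m B3 - B3 *m P) (lieb Q B4).
Proof.
by rewrite /lieb !mulmx_block !mul0mx !mulmx0 !addr0 !add0r opp_block_mx add_block_mx.
Qed.

Lemma iter_lieb_block_diag r (Q B1 B2 B3 B4 : 'M[F]_m) :
  iter r (lieb (block_mx Q 0 0 Q)) (block_mx B1 B2 B3 B4) =
  block_mx (iter r (lieb Q) B1) (iter r (lieb Q) B2)
           (iter r (lieb Q) B3) (iter r (lieb Q) B4).
Proof. by elim: r => // r IH; rewrite !iterS IH lieb_block_diag. Qed.

Lemma lieb_block_diag_sblock (Q : 'M[F]_m) c1 c2 c3 c4 :
  lieb (block_mx Q 0 0 Q) (sblock c1 c2 c3 c4) = 0.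
Proof. by rewrite lieb_block_diag !lieb_scalar -!scalar_mxC !subrr block_mx0. Qed.
End SymplecticBlocks.

Section SymplecticLmax.
Variables (F : fieldType) (p : nat).
Local Notation m := p.*2.+1.
Hypothesis dim_neq0 : m%:R != 0 :> F.

Lemma shiftJ_supp (i j : 'I_m) : shiftJ F p i j != 0 -> (j : nat).+1 = i.
Proof. by rewrite mxE; have [->|] := eqVneq (i : nat) j.+1; rewrite ?eqxx. Qed.

Lemma shiftJ_full (i j : 'I_m) : (j : nat).+1 = i -> shiftJ F p i j != 0.
Proof. by move=> Hij; rewrite mxE Hij eqxx oner_neq0. Qed.

(* the graded sl2 s preserving E and F acts identically on both:
   x = diag(x1, x1), h = diag(h1, h1) (only the stability is used from
   irreducibility) *)
Lemma graded_sl2_block_diag (x h : 'M[F]_(nV p)) :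
  graded_sl2 (@degV p) (OmegaV F p) x h (deltaV F p) ->
  s_stable x h (deltaV F p) (Espace F p) -> s_stable x h (deltaV F p) (Fspace F p) ->
  exists x1 h1 : 'M[F]_m, x = block_mx x1 0 0 x1 /\ h = block_mx h1 0 0 h1.
Proof.
move=> [_ [Hx Hh _] [_ Hhd Hxd] _] /and3P [Ex Eh _] /and3P [Fx Fh _].
have [Bx1 Bx4] := homog_block_band (k := 1) Hx.
have [Bh1 Bh4] := homog_block_band (k := 0) Hh.
move: Hhd Hxd; rewrite (stable_EF_block_diag Ex Fx) (stable_EF_block_diag Eh Fh).
rewrite deltaV_block !lieb_block_diag scale_block_mx opp_block_mx.
move=> /eq_block_mx [Eh1 _ _ Eh4] /eq_block_mx [Ex1 _ _ Ex4].
have Ex14 : ulsubmx x = drsubmx x.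
  apply: (raising_partner_unique shiftJ_supp shiftJ_full dim_neq0) Ex1 Ex4 => //.
  by rewrite Eh1 Eh4.
exists (ulsubmx x), (ulsubmx h); split; congr block_mx => //.
by rewrite -Ex1 -Ex4 Ex14.
Qed.

(* the standard sl2-triple of block-scalar matrices spanning l(V) *)
Definition sl2X : 'M[F]_(m + m) := sblock p 0 1 0 0.
Definition sl2H : 'M[F]_(m + m) := sblock p 1 0 0 (-1).
Definition sl2Y : 'M[F]_(m + m) := sblock p 0 0 1 0.

Lemma sl2_span a b c : a *: sl2X + b *: sl2H + c *: sl2Y = sblock p b a c (- b).
Proof. by rewrite !sblockZ !sblockD; congr sblock; ring. Qed.

Lemma sl2_basis : indep3 sl2X sl2H sl2Y /\ sl2_triple sl2X sl2H sl2Y.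
Proof.
split; first by move=> a b c; rewrite sl2_span -(sblock0 F p) => /sblock_inj [].
rewrite /sl2_triple /sl2X /sl2H /sl2Y !lieb_sblock !sblockZ sblockN.
by split; congr sblock; ring.
Qed.

(* every element of l(V) is block-scalar (each block is orbit-upper for the
   shift J) with trace 0, i.e. lies in span{X, H, Y} *)
Lemma lmax_sub_span (x h A : 'M[F]_(nV p)) :
  in_lmax (@degV p) (OmegaV F p) x h (deltaV F p) A -> span3 sl2X sl2H sl2Y A.
Proof.
move=> HA.
have block_orbits r : [/\ band 0 (iter r (lieb (shiftJ F p)) (ulsubmx A)),
    band 0 (iter r (lieb (shiftJ F p)) (ursubmx A)),
    band 0 (iter r (lieb (shiftJ F p)) (dlsubmx A)) &
    band 0 (iter r (lieb (shiftJ F p)) (drsubmx A))].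
  apply/nonneg_block; rewrite -iter_lieb_block_diag -deltaV_block submxK.
  exact: (in_lmax_iter r HA).2.
have block_scalar := orbit_upper_scalar shiftJ_supp shiftJ_full dim_neq0.
have EA : A = sblock p (ulsubmx A ord0 ord0) (ursubmx A ord0 ord0)
                       (dlsubmx A ord0 ord0) (drsubmx A ord0 ord0).
  rewrite /sblock -!block_scalar ?submxK // => r; by case: (block_orbits r).
have trace0 : ulsubmx A ord0 ord0 + drsubmx A ord0 ord0 = 0.
  apply/(sp_sblock p _ (ursubmx A ord0 ord0) (dlsubmx A ord0 ord0)).
  by rewrite -EA; exact: (in_lmax_iter 0 HA).1.
exists (ursubmx A ord0 ord0), (ulsubmx A ord0 ord0), (dlsubmx A ord0 ord0).
by rewrite sl2_span {1}EA; congr sblock; apply/eqP; rewrite -addr_eq0 addrC trace0.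
Qed.

(* conversely span{X, H, Y} is an ad s-submodule (annihilated by s) inside
   sp and in nonnegative degree *)
Lemma span_sub_lmax (x1 h1 : 'M[F]_m) (A : 'M[F]_(nV p)) :
  span3 sl2X sl2H sl2Y A ->
  in_lmax (@degV p) (OmegaV F p) (block_mx x1 0 0 x1) (block_mx h1 0 0 h1)
    (deltaV F p) A.
Proof.
exists (span3 sl2X sl2H sl2Y); split=> //; last first.
  move=> _ [a [b [c ->]]]; rewrite sl2_span.
  split; first by apply/sp_sblock; rewrite subrr.
  by apply/nonneg_block; split; apply: band0_scalar.
split.
- by exists 0, 0, 0; rewrite !scale0r !addr0.
- move=> _ _ [a [b [c ->]]] [a' [b' [c' ->]]]; exists (a + a'), (b + b'), (c + c').
  by rewrite !sl2_span sblockD; congr sblock; ring.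
- move=> k _ [a [b [c ->]]]; exists (k * a), (k * b), (k * c).
  by rewrite !sl2_span sblockZ; congr sblock; ring.
move=> _ _ [a [b [c ->]]] [a' [b' [c' ->]]].
rewrite sl2_span deltaV_block !scale_block_mx !add_block_mx !scaler0 !addr0.
by rewrite lieb_block_diag_sblock; exists 0, 0, 0; rewrite !scale0r !addr0.
Qed.
End SymplecticLmax.

Lemma degL_mono (k : nat) (i j : 'I_(k.*2.+2)) : degL i <= degL j -> (i <= j)%N.
Proof. by rewrite /degL lerD2r ler_nat. Qed.

Theorem mainTheorem14 (F : closedFieldType) (charF0 : [pchar F] =i pred0) :
  (forall (p : nat) (x h : 'M[F]_(nV p)),
     graded_sl2 (@degV p) (OmegaV F p) x h (deltaV F p) ->
     irreducible_sub x h (deltaV F p) (Espace F p) ->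
     irreducible_sub x h (deltaV F p) (Fspace F p) ->
     exists X H Y : 'M[F]_(nV p),
       [/\ indep3 X H Y, sl2_triple X H Y &
           forall A, in_lmax (@degV p) (OmegaV F p) x h (deltaV F p) A
                     <-> span3 X H Y A])
  /\
  (forall (k : nat) (Om tau x h : 'M[F]_(k.*2.+2)),
     Om^T = - Om -> Om \in unitmx ->
     (forall i j, Om i j != 0 -> degL i + degL j = 0) ->
     in_sp Om tau ->
     (forall i j : 'I_(k.*2.+2), tau i j != 0 -> (j : nat).+1 = i) ->
     (forall i j : 'I_(k.*2.+2), (j : nat).+1 = i -> tau i j != 0) ->
     graded_sl2 (@degL k) Om x h tau ->
     irreducible_sub x h tau 1%:M ->
     forall A, in_lmax (@degL k) Om x h tau A -> A = 0).
Proof.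
have natr_neq0 n : n.+1%:R != 0 :> F by rewrite ((pcharf0P F).1 charF0).
split.
  move=> p x h Hsl2 [Estab _ _] [Fstab _ _].
  have [x1 [h1 [Ex Eh]]] := graded_sl2_block_diag (natr_neq0 _) Hsl2 Estab Fstab.
  have [indep triple] := sl2_basis F p.
  exists (sl2X F p), (sl2H F p), (sl2Y F p); split=> // A; split.
    exact: (@lmax_sub_span F p (natr_neq0 _)).
  by rewrite Ex Eh; apply: span_sub_lmax.
move=> k Om tau x h _ Om_unit _ _ tau_supp tau_full _ _ A.
apply: lmax_single_shift_eq0 tau_supp tau_full (natr_neq0 _) (natr_neq0 1) Om_unit _.
exact: degL_mono.
Qed.
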